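(* Let $\mathcal G$ be a directed acyclic graph and $W$ a subset of its vertex set such that the induced subgraph $\mathcal G|_W$ is connected. The following are equivalent: (a) $\mathcal G|_W$ is path-induced; (b) $\mathcal G/(\mathcal G|_W)$ is acyclic; (c) there is a topological sort of $\mathcal G$ in which the vertices of $W$ are consecutive. Moreover, under any of these equivalent conditions, there is a bijection between topological sorts of $\mathcal G$ in which the vertices of $W$ are consecutive and pairs consisting of a topological sort of $\mathcal G|_W$ and a topological sort of $\mathcal G/(\mathcal G|_W)$.
   Context: The induced subgraph $\mathcal G|_W$ has vertex set $W$ and all edges of $\mathcal G$ between vertices of $W$. It is path-induced if for all $x,y\in W$, every path from $x$ to $y$ in $\mathcal G$ is contained in $\mathcal G|_W$. The contraction $\mathcal G/(\mathcal G|_W)$ (for connected $\mathcal G|_W$) is the graph minor obtained by contracting every edge of $\mathcal G|_W$: its vertex set is $(\text{vertices of }\mathcal G\setminus W)+\{x_W\}$; for $x,y\ne x_W$ its edges $x\to y$ are those of $\mathcal G$; there is an edge $x_W\to y$ for each $z\in W$ and edge $z\to y$ of $\mathcal G$; an edge $x\to x_W$ for each $z\in W$ and edge $x\to z$ of $\mathcal G$; and no edges from $x_W$ to $x_W$. Connectedness is weak (underlying undirected graph). *)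

From mathcomp Require Import all_boot.
Set Implicit Arguments. Unset Strict Implicit. Unset Printing Implicit Defensive.

Definition acyclic (V : Type) (E : rel V) : Prop :=
  forall x p, path E x p -> last x p = x -> p = [::].

Definition undir_in (T : finType) (E : rel T) (W : {set T}) : rel T :=
  fun x y => [&& x \in W, y \in W & E x y || E y x].

Definition weakly_connected_induced (T : finType) (E : rel T) (W : {set T}) : Prop :=
  W != set0 /\ forall x y, x \in W -> y \in W -> connect (undir_in E W) x y.

Definition path_induced (T : finType) (E : rel T) (W : {set T}) : Prop :=
  forall x p, x \in W -> last x p \in W -> path E x p -> all (mem W) (x :: p).

Definition induced_vtx (T : finType) (W : {set T}) := {x : T | x \in W}.
Definition induced_rel (T : finType) (E : rel T) (W : {set T})
  : rel (induced_vtx W) := fun x y => E (val x) (val y).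

(* Vertex type of the contraction G/(G|_W): vertices outside W, plus
   None standing for the contracted vertex x_W. *)
Definition contr_vtx (T : finType) (W : {set T}) := option {x : T | x \notin W}.
Definition contr_rel (T : finType) (E : rel T) (W : {set T})
  : rel (contr_vtx W) := fun u v =>
  match u, v with
  | Some x, Some y => E (val x) (val y)
  | None, Some y => [exists z in W, E z (val y)]
  | Some x, None => [exists z in W, E (val x) z]
  | None, None => false
  end.

Definition topsort (V : finType) (E : rel V) (s : seq V) : Prop :=
  perm_eq s (enum V) /\ forall x y, E x y -> index x s < index y s.

Definition consecutive (T : finType) (W : {set T}) (s : seq T) : Prop :=
  forall x y z, x \in W -> z \in W ->
    index x s <= index y s -> index y s <= index z s -> y \in W.

Arguments induced_rel {T} E W.
Arguments contr_rel {T} E W.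
Arguments consecutive {T} W s.

(* A directed cycle of the contraction either avoids x_W, and then is
   a cycle of G, or passes through x_W, and then lifts to a directed path of G
   that leaves W and comes back to it; since G is acyclic, the contraction is
   thus acyclic exactly when G|_W is path-induced.  A sequence of distinct
   vertices in which W is consecutive has the shape a ++ s_W ++ b with a and
   b outside W, and it is a topological sort of G if and only if s_W is one of
   G|_W and a ++ [x_W] ++ b is one of the contraction.  This gives (b) <-> (c)
   and the bijection, whose inverse expands x_W into s_W.  The bijection does
   not need (a), and of the connectedness of G|_W only W <> {} is used. *)

From mathcomp Require Import all_boot zify.
From Stdlib Require Import ProofIrrelevance.
Set Implicit Arguments. Unset Strict Implicit. Unset Printing Implicit Defensive.

Lemma map_val_pmap_insub (X : Type) (P : pred X) (sT : subType P) (s : seq X) :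
  all P s -> map val (pmap (insub : X -> option sT) s) = s.
Proof. by rewrite (pmap_filter (insubK _)) (eq_filter (isSome_insub _)) => /all_filterP. Qed.

Lemma undup_nseq (X : eqType) n (x : X) : undup (nseq n.+1 x) = [:: x].
Proof. by elim: n => // n IH; rewrite /= inE eqxx. Qed.

Lemma map_Some_pmap_id (X : eqType) (s : seq (option X)) :
  None \notin s -> map Some (pmap id s) = s.
Proof. by elim: s => //= -[x|] s IH; rewrite inE //= => /IH ->. Qed.

Section Acyclic.
Variables (V : finType) (e : rel V).

Lemma acyclicP : acyclic e <-> forall x y, e x y -> ~~ connect e y x.
Proof.
split=> [ac x y exy | noback x [//|y p] /= /andP[exy py] lastx].
  apply/connectP => -[p py lastx].
  by have := ac x (y :: p); rewrite /= exy py -lastx => /(_ isT erefl).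
by have := noback x y exy; rewrite (_ : connect e y x) //; apply/connectP; exists p.
Qed.

Lemma acyclic_connect_antisym x y :
  acyclic e -> connect e x y -> connect e y x -> x = y.
Proof.
move=> /acyclicP ac /connectP[[//|w p] /= /andP[exw pw] ->] cyx.
have cwx : connect e w x by apply: connect_trans cyx; apply/connectP; exists p.
by have := ac x w exw; rewrite cwx.
Qed.

Lemma topsortP s :
  topsort e s <-> [/\ uniq s, forall x, x \in s & forall x y, e x y -> index x s < index y s].
Proof.
split=> [[pe ord] | [us ins ord]]; last first.
  by split=> //; apply: uniq_perm; rewrite ?enum_uniq // => x; rewrite ins mem_enum.
by split=> //; [rewrite (perm_uniq pe) enum_uniq | move=> x; rewrite (perm_mem pe) mem_enum].
Qed.

Lemma topsort_connect_index s x y :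
  topsort e s -> connect e x y -> index x s <= index y s.
Proof.
move=> [_ ord] /connectP[p + ->]; elim: p x => //= w p IH x /andP[exw pw].
exact: leq_trans (ltnW (ord _ _ exw)) (IH _ pw).
Qed.

Lemma topsort_acyclic s : topsort e s -> acyclic e.
Proof.
move=> ts; apply/acyclicP => x y exy; apply/negP => /(topsort_connect_index ts).
by rewrite leqNgt ts.2.
Qed.

Lemma topsort_exists : acyclic e -> exists s, topsort e s.
Proof.
move=> /acyclicP ac.
pose k x := #|[set z | connect e z x]|.
have k_mono x y : e x y -> k x < k y.
  move=> exy; apply: proper_card; apply/properP; split.
    by apply/subsetP => z; rewrite !inE => czx; apply: connect_trans czx (connect1 exy).
  by exists y; rewrite !inE ?connect0 ?ac.
pose lek x y := k x <= k y.
have lek_trans : transitive lek by move=> ? ? ? /leq_trans; apply.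
exists (sort lek (enum V)); split; first by rewrite perm_sort.
move=> x y exy; rewrite ltnNge; apply/negP => /(sorted_leq_index lek_trans) leyx.
have := leyx (fun _ => leqnn _) (sort_sorted (fun a b => leq_total (k a) (k b)) _).
by rewrite !mem_sort !mem_enum /lek leqNgt k_mono // => /(_ isT isT).
Qed.

End Acyclic.

Section Contraction.
Variables (T : finType) (E : rel T) (W : {set T}).
Local Notation IV := (induced_vtx W).
Local Notation OV := {x : T | x \notin W}.
Local Notation CV := (contr_vtx W).
Local Notation contr := (contr_rel E W).

Definition contr_proj (x : T) : CV := insub x.

Lemma contr_proj_val (y : OV) : contr_proj (val y) = Some y.
Proof. exact: valK. Qed.

Lemma contr_proj_in x : x \in W -> contr_proj x = None.
Proof. by move=> xW; rewrite /contr_proj insubN ?negbK. Qed.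

Lemma contr_proj_eq x y :
  contr_proj x = contr_proj y -> x = y \/ x \in W /\ y \in W.
Proof.
rewrite /contr_proj.
case: insubP => [x' _ <-|/negPn xW]; case: insubP => [y' _ <-|/negPn yW] //.
- by move=> [->]; left.
- by right.
Qed.

Lemma contr_rel_proj x y :
  E x y -> (x \notin W) || (y \notin W) -> contr (contr_proj x) (contr_proj y).
Proof.
rewrite /contr_proj /contr_rel.
case: insubP => [x' _ <-|/negPn xW]; case: insubP => [y' _ <-|/negPn yW] //= exy.
- by move=> _; apply/existsP; exists y; rewrite yW.
- by move=> _; apply/existsP; exists x; rewrite xW.
- by rewrite xW yW.
Qed.

Lemma contr_rel_lift u v :
  contr u v -> exists x y, [/\ E x y, contr_proj x = u & contr_proj y = v].
Proof.
case: u v => [x'|] [y'|] //=; rewrite /contr_rel.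
- by move=> exy; exists (val x'), (val y'); rewrite !contr_proj_val.
- case/existsP=> z /andP[zW exz]; exists (val x'), z.
  by rewrite contr_proj_val contr_proj_in.
- case/existsP=> z /andP[zW ezy]; exists z, (val y').
  by rewrite contr_proj_val contr_proj_in.
Qed.

Lemma connect_contr_proj x y :
  connect E x y -> connect contr (contr_proj x) (contr_proj y).
Proof.
move=> /connectP[p + ->]; elim: p x => [|w p IH] x /=; first by rewrite connect0.
case/andP=> exw /IH; apply: connect_trans.
case: (boolP ((x \notin W) || (w \notin W))) => [out|]; first exact/connect1/contr_rel_proj.
by rewrite negb_or !negbK => /andP[xW wW]; rewrite !contr_proj_in.
Qed.

Lemma connect_contr_lift x y :
  connect contr (contr_proj x) (contr_proj y) ->
  connect E x y \/ exists z z', [/\ z \in W, z' \in W, connect E x z & connect E z' y].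
Proof.
move=> /connectP[p]; elim: p x => [|v p IH] x /=.
  move=> _ /esym/contr_proj_eq[->|[xW yW]]; first by left.
  by right; exists x, y; rewrite !connect0.
case/andP=> /contr_rel_lift[x1 [y1 [ex1y1 x1x <-]]] py1 lasty.
have [cy1y|[z [z' [zW z'W cy1z cz'y]]]] := IH y1 py1 lasty.
  have cx1y : connect E x1 y by apply: connect_trans (connect1 ex1y1) cy1y.
  have [<-|[x1W xW]] := contr_proj_eq x1x; first by left.
  by right; exists x, x1; rewrite connect0.
have cx1z : connect E x1 z by apply: connect_trans (connect1 ex1y1) cy1z.
have [<-|[x1W xW]] := contr_proj_eq x1x; right; first by exists z, z'.
by exists x, z'; rewrite connect0.
Qed.

Lemma path_inducedP :
  path_induced E W <->
  forall z v z', z \in W -> z' \in W -> connect E z v -> connect E v z' -> v \in W.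
Proof.
split=> [pind z v z' zW z'W /connectP[p1 p1v ->] /connectP[p2 p2z' z'last]|conv].
  have := pind z (p1 ++ p2) zW; rewrite last_cat -z'last cat_path p1v p2z'.
  by move=> /(_ z'W isT) /allP; apply; rewrite -cat_cons mem_cat mem_last.
move=> z p zW lastW pz; apply/allP=> v vp.
apply: conv zW lastW _ _; first exact: path_connect vp.
case/splitPl: vp pz => p1 p2 <-; rewrite cat_path last_cat => /andP[_ pv].
by apply/connectP; exists p2.
Qed.

Lemma path_induced_contr_acyclic :
  acyclic E -> path_induced E W -> acyclic contr.
Proof.
move=> /acyclicP acE /path_inducedP pind; apply/acyclicP => u v cuv.
have [x [y [exy xu yv]]] := contr_rel_lift cuv; subst u v; apply/negP.
case/connect_contr_lift=> [cyx|[z [z' [zW z'W cyz cz'x]]]].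
  by move: (acE _ _ exy); rewrite cyx.
have cxz : connect E x z by apply: connect_trans (connect1 exy) cyz.
have cz'y : connect E z' y by apply: connect_trans cz'x (connect1 exy).
move: cuv; rewrite (contr_proj_in (pind _ _ _ z'W zW cz'x cxz)).
by rewrite (contr_proj_in (pind _ _ _ z'W zW cz'y cyz)).
Qed.

Lemma contr_acyclic_path_induced : acyclic contr -> path_induced E W.
Proof.
move=> acC; apply/path_inducedP => z v z' zW z'W czv cvz'; apply/negPn/negP => vW.
move: (connect_contr_proj czv) (connect_contr_proj cvz').
rewrite (contr_proj_in zW) (contr_proj_in z'W) => cNv cvN.
by have := acyclic_connect_antisym acC cNv cvN; rewrite /contr_proj insubT.
Qed.

Lemma acyclic_induced : acyclic E -> acyclic (induced_rel E W).
Proof.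
move=> /acyclicP acE; apply/acyclicP => x y exy; apply/negP => cyx.
suff : connect E (val y) (val x) by move: (acE _ _ exy) => /negbTE ->.
case/connectP: cyx => p + ->; elim: p {exy} y => [|w p IH] y /=; first by rewrite connect0.
by case/andP=> eyw /IH; apply: connect_trans; apply: connect1.
Qed.

Variant vertex_spec (x : T) : Type :=
  | VertexIn (z : IV) of x = val z
  | VertexOut (y : OV) of x = val y.

Lemma vertexP x : vertex_spec x.
Proof.
case: (boolP (x \in W)) => xW.
- exact: (VertexIn (z := Sub x xW)).
- exact: (VertexOut (y := Sub x xW)).
Qed.

Lemma val_in_notin_out (s : seq OV) (z : IV) : (val z \in map val s) = false.
Proof. by apply/mapP => -[y _ yz]; move: (valP y); rewrite -yz (valP z). Qed.

Definition blocks (a : seq OV) (si : seq IV) (b : seq OV) : seq T :=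
  map val a ++ map val si ++ map val b.

Definition contr_blocks (a b : seq OV) : seq CV := map Some a ++ None :: map Some b.

Section Blocks.
Variables (a b : seq OV) (si : seq IV).
Local Notation s := (blocks a si b).
Local Notation sc := (contr_blocks a b).

Lemma val_out_notin_in (y : OV) : (val y \in map val si) = false.
Proof. by apply/mapP => -[z _ yz]; move: (valP y); rewrite yz (valP z). Qed.

Lemma mem_blocks_in (z : IV) : (val z \in s) = (z \in si).
Proof. by rewrite !mem_cat !val_in_notin_out (mem_map val_inj) orbF. Qed.

Lemma mem_blocks_out (y : OV) : (val y \in s) = (y \in a ++ b).
Proof. by rewrite !mem_cat val_out_notin_in !(mem_map val_inj). Qed.

Lemma mem_contr_blocks (y : OV) : (Some y \in sc) = (y \in a ++ b).
Proof. by rewrite mem_cat inE !(mem_map (@Some_inj _)) mem_cat. Qed.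

Lemma uniq_blocks : uniq s = uniq si && uniq (a ++ b).
Proof.
rewrite uniq_catCA cat_uniq -map_cat !(map_inj_uniq val_inj).
by rewrite (_ : has _ _ = false) //; apply/hasPn => x /mapP[y _ ->]; rewrite val_out_notin_in.
Qed.

Lemma uniq_contr_blocks : uniq sc = uniq (a ++ b).
Proof.
rewrite /contr_blocks -cat1s uniq_catCA /= -map_cat (map_inj_uniq (@Some_inj _)).
by rewrite (_ : None \in _ = false) //; apply/mapP => -[].
Qed.

Lemma index_blocks_in (z : IV) : z \in si -> index (val z) s = size a + index z si.
Proof.
move=> zsi.
by rewrite index_cat val_in_notin_out size_map index_cat (mem_map val_inj) zsi (index_map val_inj).
Qed.

Lemma index_blocks_out (y : OV) :
  index (val y) s = if y \in a then index y a else size a + size si + index y b.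
Proof.
rewrite index_cat (mem_map val_inj) (index_map val_inj) index_cat val_out_notin_in.
by rewrite !size_map (index_map val_inj) addnA.
Qed.

Lemma index_contr_blocks_None : index None sc = size a.
Proof.
by rewrite index_cat size_map /= addn0 (_ : None \in _ = false) //; apply/mapP => -[].
Qed.

Lemma index_contr_blocks_out (y : OV) :
  index (Some y) sc = if y \in a then index y a else size a + 1 + index y b.
Proof.
rewrite index_cat (mem_map (@Some_inj _)) (index_map (@Some_inj _)) /= size_map.
by rewrite (index_map (@Some_inj _)) addn1 addSnnS.
Qed.

Lemma index_blocks_lt_induced (z z' : IV) : z \in si -> z' \in si ->
  (index (val z) s < index (val z') s) = (index z si < index z' si).
Proof. by move=> zsi z'si; rewrite !index_blocks_in // ltn_add2l. Qed.

Lemma index_blocks_lt_contr x y : (forall z : IV, z \in si) ->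
  (x \notin W) || (y \notin W) ->
  (index x s < index y s) = (index (contr_proj x) sc < index (contr_proj y) sc).
Proof.
move=> si_full.
have in_pos (z : IV) : index z si < size si by rewrite index_mem.
have out_pos (u : OV) : u \in a -> index u a < size a by rewrite index_mem.
case: (vertexP x) => [x' ->|x' ->]; case: (vertexP y) => [y' ->|y' ->];
  rewrite ?(valP x') ?(valP y') // => _;
  rewrite ?contr_proj_val ?contr_proj_in ?(valP x') ?(valP y') //;
  rewrite ?index_blocks_in ?index_blocks_out ?index_contr_blocks_None ?index_contr_blocks_out //.
- by have := in_pos x'; case: ifP => [/out_pos|_]; lia.
- by have := in_pos y'; case: ifP => [/out_pos|_]; lia.
- by case: ifP => [/out_pos|_]; case: ifP => [/out_pos|_]; lia.
Qed.

Lemma topsort_blocks : topsort E s <-> topsort (induced_rel E W) si /\ topsort contr sc.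
Proof.
rewrite !topsortP uniq_blocks uniq_contr_blocks.
split=> [[/andP[usi uab] s_full ord] | [[usi si_full ordi] [uab sc_full ordc]]].
  have si_full (z : IV) : z \in si by rewrite -mem_blocks_in.
  split; split=> //.
  - by move=> z z' ezz'; rewrite -index_blocks_lt_induced //; apply: ord.
  - by case=> [y|]; rewrite ?mem_contr_blocks -?mem_blocks_out // mem_cat inE eqxx orbT.
  move=> u v cuv; have [x [y [exy xu yv]]] := contr_rel_lift cuv; subst u v.
  rewrite -index_blocks_lt_contr //; first exact: ord.
  by apply: contraTT cuv; rewrite negb_or !negbK => /andP[xW yW]; rewrite !contr_proj_in.
split=> [|x|x y exy]; first by rewrite usi.
  by case: (vertexP x) => [x' ->|x' ->]; rewrite ?mem_blocks_in ?mem_blocks_out -?mem_contr_blocks.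
have [out|] := boolP ((x \notin W) || (y \notin W)).
  by rewrite index_blocks_lt_contr //; apply/ordc/contr_rel_proj.
rewrite negb_or !negbK; move: exy.
case: (vertexP x) => [x' ->|x' ->]; last by rewrite (negbTE (valP x')).
case: (vertexP y) => [y' ->|y' ->]; last by rewrite (negbTE (valP y')) andbF.
by move=> exy _; rewrite index_blocks_lt_induced //; apply: ordi.
Qed.

Lemma blocks_consecutive : (forall z : IV, z \in si) -> consecutive W s.
Proof.
move=> si_full x y z.
case: (vertexP x) => [x' ->|x' ->]; last by rewrite (negbTE (valP x')).
case: (vertexP z) => [z' ->|z' ->]; last by rewrite (negbTE (valP z')).
move=> _ _; rewrite !index_blocks_in //.
have : index z' si < size si by rewrite index_mem.
case: (vertexP y) => [y' ->|y' ->]; first by rewrite (valP y').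
rewrite index_blocks_out (negbTE (valP y')).
have out_pos : y' \in a -> index y' a < size a by rewrite index_mem.
by case: ifP => [/out_pos|_]; lia.
Qed.

End Blocks.

Lemma consecutive_blocks s :
  uniq s -> consecutive W s ->
  exists (a : seq OV) (si : seq IV) (b : seq OV), s = blocks a si b.
Proof.
move=> us cons.
pose k := find (mem W) s; pose m := find (predC (mem W)) (drop k s).
have noWA : ~~ has (mem W) (take k s) by apply/negP => /find_ltn; rewrite ltnn.
have allWI : ~~ has (predC (mem W)) (take m (drop k s)).
  by apply/negP => /find_ltn; rewrite ltnn.
have noWB : ~~ has (mem W) (drop m (drop k s)).
  (* The first vertex in W, the first vertex outside W after it, and w would
     contradict consecutiveness. *)
  apply/hasPn => w wB; apply/negP => wW; rewrite drop_drop addnC in wB.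
  have km_lt : k + m < size s by rewrite ltnNge; apply: contraL wB => /drop_oversize ->.
  have hasW : has (mem W) s by apply/hasP; exists w => //; apply: mem_drop wB.
  have k_lt : k < size s by rewrite -has_find.
  have hasO : has (predC (mem W)) (drop k s) by rewrite has_find size_drop ltn_subRL.
  have startW : nth w s k \in W by apply: (nth_find w hasW).
  have stopO : nth w s (k + m) \notin W by rewrite -nth_drop; apply: (nth_find w hasO).
  have wpos : k + m <= index w s.
    rewrite -(cat_take_drop (k + m) s) index_cat.
    case: ifP => [wT|_]; last by rewrite size_takel ?leq_addr // ltnW.
    by move: us; rewrite -(cat_take_drop (k + m) s) cat_uniq => /and3P[_ /hasP[]]; exists w.
  have := cons _ (nth w s (k + m)) _ startW wW; rewrite !index_uniq // => /(_ (leq_addr _ _) wpos).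
  by rewrite (negbTE stopO).
exists (pmap insub (take k s)), (pmap insub (take m (drop k s))), (pmap insub (drop m (drop k s))).
rewrite /blocks !map_val_pmap_insub ?cat_take_drop //.
- by move: noWB; rewrite -all_predC.
- by move: allWI; rewrite -all_predC; apply: sub_all => x /negPn.
- by move: noWA; rewrite -all_predC.
Qed.

Lemma contr_topsort_blocks sc :
  topsort contr sc -> exists a b, sc = contr_blocks a b.
Proof.
case/topsortP=> usc /(_ None) Nsc _; case/splitPr: Nsc usc => p1 p2.
rewrite cat_uniq /= negb_or => /and4P[_ /andP[Np1 _] Np2 _].
by exists (pmap id p1), (pmap id p2); rewrite /contr_blocks !map_Some_pmap_id.
Qed.

Lemma topsort_consecutiveP s :
  topsort E s /\ consecutive W s <->
  exists a si b,
    [/\ s = blocks a si b, topsort (induced_rel E W) si & topsort contr (contr_blocks a b)].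
Proof.
split=> [[ts cons] | [a [si [b [-> tsi tsc]]]]].
  case/topsortP: (ts) => us _ _.
  have [a [si [b es]]] := consecutive_blocks us cons; subst s.
  by exists a, si, b; case/topsort_blocks: ts.
case/topsortP: (tsi) => _ si_full _.
by split; [apply/topsort_blocks | apply: blocks_consecutive].
Qed.

Definition expand (p : seq IV * seq CV) : seq T :=
  flatten [seq if v is Some y then [:: val y] else map val p.1 | v <- p.2].

Definition split_seq (s : seq T) : seq IV * seq CV :=
  (pmap insub s, undup (map contr_proj s)).

Lemma expand_contr_blocks a si b : expand (si, contr_blocks a b) = blocks a si b.
Proof. by rewrite /expand map_cat flatten_cat /= -!map_comp !flatten_map1. Qed.

Lemma pmap_insub_blocks a si b : pmap insub (blocks a si b) = si.
Proof.
have pmap_out (s : seq OV) : pmap (insub : T -> option IV) (map val s) = [::].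
  by elim: s => //= y s ->; rewrite insubN ?(valP y).
by rewrite /blocks !pmap_cat !pmap_out (map_pK valK) cats0.
Qed.

Lemma undup_contr_proj_blocks a si b :
  si != [::] -> uniq (a ++ b) -> undup (map contr_proj (blocks a si b)) = contr_blocks a b.
Proof.
case: si => // z si _ uab.
have map_out (s : seq OV) : map contr_proj (map val s) = map Some s.
  by rewrite -map_comp; apply: eq_map => y; apply: contr_proj_val.
have map_in (s : seq IV) : map contr_proj (map val s) = nseq (size s) None.
  by elim: s => //= z' s ->; rewrite contr_proj_in ?(valP z').
rewrite /blocks !map_cat !map_out map_in undup_cat undup_cat undup_nseq.
move: uab; rewrite cat_uniq => /and3P[ua /hasPn ab ub].
rewrite !undup_id ?(map_inj_uniq (@Some_inj _)) //= (_ : None \in _ = false); last first.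
  by apply/mapP => -[].
congr (_ ++ _); apply/all_filterP/allP => _ /mapP[y ya ->].
by rewrite inE mem_cat mem_nseq andbF (mem_map (@Some_inj _)); apply: contraL ya => /ab.
Qed.

Hypothesis W_neq0 : W != set0.

Lemma topsort_induced_neq_nil si : topsort (induced_rel E W) si -> si != [::].
Proof.
case/set0Pn: W_neq0 => w wW /topsortP[_ /(_ (Sub w wW)) + _].
by apply: contraTneq => ->.
Qed.

Lemma split_blocks a si b :
  topsort (induced_rel E W) si -> topsort contr (contr_blocks a b) ->
  split_seq (blocks a si b) = (si, contr_blocks a b).
Proof.
move=> tsi tsc; have uab : uniq (a ++ b) by case/topsortP: tsc; rewrite uniq_contr_blocks.
by rewrite /split_seq pmap_insub_blocks undup_contr_proj_blocks // topsort_induced_neq_nil.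
Qed.

Lemma topsort_split s :
  topsort E s /\ consecutive W s ->
  topsort (induced_rel E W) (split_seq s).1 /\ topsort contr (split_seq s).2.
Proof. by case/topsort_consecutiveP=> a [si [b [-> tsi tsc]]]; rewrite split_blocks. Qed.

Lemma expand_split s : topsort E s /\ consecutive W s -> expand (split_seq s) = s.
Proof.
case/topsort_consecutiveP=> a [si [b [-> tsi tsc]]].
by rewrite split_blocks // expand_contr_blocks.
Qed.

Lemma topsort_expand p :
  topsort (induced_rel E W) p.1 /\ topsort contr p.2 ->
  topsort E (expand p) /\ consecutive W (expand p).
Proof.
case: p => si sc [/= tsi tsc]; have [a [b esc]] := contr_topsort_blocks tsc; subst sc.
by apply/topsort_consecutiveP; exists a, si, b; rewrite expand_contr_blocks.
Qed.

Lemma split_expand p :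
  topsort (induced_rel E W) p.1 /\ topsort contr p.2 -> split_seq (expand p) = p.
Proof.
case: p => si sc [/= tsi tsc]; have [a [b esc]] := contr_topsort_blocks tsc; subst sc.
by rewrite expand_contr_blocks split_blocks.
Qed.

End Contraction.

Theorem lemma3p20 (T : finType) (E : rel T) (W : {set T}) :
  acyclic E -> weakly_connected_induced E W ->
  (path_induced E W <-> acyclic (contr_rel E W)) /\
  (acyclic (contr_rel E W) <-> exists s, topsort E s /\ consecutive W s) /\
  (path_induced E W ->
   exists f : {s : seq T | topsort E s /\ consecutive W s} ->
              {p : seq (induced_vtx W) * seq (contr_vtx W) |
                 topsort (induced_rel E W) p.1 /\ topsort (contr_rel E W) p.2},
     bijective f).
Proof.
move=> acE [W_neq0 _]; split.
  by split; [apply: path_induced_contr_acyclic | apply: contr_acyclic_path_induced].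
split.
  split=> [acC | [s /topsort_consecutiveP[a [si [b [_ _ tsc]]]]]]; last exact: topsort_acyclic tsc.
  have [si tsi] := topsort_exists (acyclic_induced (W := W) acE).
  have [sc tsc] := topsort_exists acC.
  by exists (expand (si, sc)); apply: topsort_expand.
move=> _.
exists (fun s => exist _ (split_seq W (sval s)) (topsort_split W_neq0 (svalP s))).
exists (fun p => exist _ (expand (sval p)) (topsort_expand (svalP p))).
  by move=> [s ts] /=; apply: subset_eq_compat; exact: (expand_split W_neq0 ts).
by move=> [[si sc] ts] /=; apply: subset_eq_compat; exact: (split_expand W_neq0 ts).
Qed.
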